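(* Let $d$ be prime, $n\ge 1$, $G$ invertible over $\mathbb Z_d$ with $N=(\det G)^{-1}$, and let $\rho,\sigma$ be $n$-qudit states. Then for all $\vec p,\vec q\in\mathbb Z_d^n$, $$\Xi_{\rho\boxtimes\sigma}(\vec p,\vec q)=\Xi_\rho(Ng_{11}\vec p,\ g_{00}\vec q)\;\Xi_\sigma(-Ng_{10}\vec p,\ g_{01}\vec q).$$
   Context: Fix a prime $d$; on $\mathcal H=\mathbb C^d$, $\chi(k)=e^{2\pi ik/d}$, $X|k\rangle=|k+1\rangle$, $Z|k\rangle=\chi(k)|k\rangle$. Weyl operators: $w(p,q)=\chi(-2^{-1}pq)Z^pX^q$ for odd $d$, $w(p,q)=i^{-pq}Z^pX^q$ for $d=2$, $w(\vec p,\vec q)=\bigotimes_k w(p_k,q_k)$. Characteristic function $\Xi_\rho(\vec p,\vec q)=\mathrm{Tr}[\rho\,w(-\vec p,-\vec q)]$. Let $G=\begin{pmatrix}g_{00}&g_{01}\\ g_{10}&g_{11}\end{pmatrix}$ over $\mathbb Z_d$ with $\det G\not\equiv0$, $N=(\det G)^{-1}$. Key unitary $U$ on $\mathcal H_A\otimes\mathcal H_B$ ($\mathcal H_A=\mathcal H_B=\mathcal H^{\otimes n}$): $U|\vec i\rangle|\vec j\rangle=|Ng_{11}\vec i-Ng_{10}\vec j\rangle|-Ng_{01}\vec i+Ng_{00}\vec j\rangle$. Convolution: $\rho\boxtimes\sigma=\mathrm{Tr}_B[U(\rho\otimes\sigma)U^\dagger]$. *)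

From HB Require Import structures.
From mathcomp Require Import all_boot all_order all_algebra all_field.
Set Implicit Arguments. Unset Strict Implicit. Unset Printing Implicit Defensive.
Import Order.TTheory GRing.Theory Num.Theory.
Local Open Scope ring_scope.

(* Operators on the Hilbert space with orthonormal basis indexed by a finType T,
   represented by their matrix entries <i|A|j> = A i j. *)
Definition op (T : finType) := T -> T -> algC.

Definition mulop (T : finType) (A B : op T) : op T :=
  fun i j => \sum_k A i k * B k j.
Definition expop (T : finType) (A : op T) (m : nat) : op T :=
  iter m (mulop A) (fun i j => (i == j)%:R).
Definition adjop (T : finType) (A : op T) : op T := fun i j => (A j i)^*.
Definition trop (T : finType) (A : op T) : algC := \sum_i A i i.

Definition psdop (T : finType) (A : op T) : Prop :=
  forall v : T -> algC, 0 <= \sum_i \sum_j (v i)^* * A i j * v j.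
Definition is_state (T : finType) (A : op T) : Prop := psdop A /\ trop A = 1.

(* chi(k) = e^{2 pi i k/d};  d.-root (-1) = e^{i pi/d} (minimal argument). *)
Definition omega (d : nat) : algC := (d.-root (-1)) ^+ 2.
Definition chi (d : nat) (k : 'F_d) : algC := omega d ^+ (k : nat).

Definition Xop (d : nat) : op 'F_d := fun i j => (i == j + 1)%:R.
Definition Zop (d : nat) : op 'F_d := fun i j => (i == j)%:R * chi i.

Definition wphase (d : nat) (p q : 'F_d) : algC :=
  if d == 2%N then ('i ^+ ((p : nat) * (q : nat))%N)^-1
  else chi (- (2%:R)^-1 * p * q).
Definition w1 (d : nat) (p q : 'F_d) : op 'F_d :=
  fun i j => wphase p q * mulop (expop (@Zop d) p) (expop (@Xop d) q) i j.

(* n-qudit space: basis indexed by vectors in Z_d^n *)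
Definition qv (n d : nat) := {ffun 'I_n -> 'F_d}.

(* tensor product of the single-qudit Weyl operators *)
Definition wn (n d : nat) (p q : qv n d) : op (qv n d) :=
  fun i j => \prod_k w1 (p k) (q k) (i k) (j k).

Definition vopp (n d : nat) (p : qv n d) : qv n d := [ffun k => - p k].
Definition vscale (n d : nat) (c : 'F_d) (p : qv n d) : qv n d := [ffun k => c * p k].

Definition Xi (n d : nat) (rho : op (qv n d)) (p q : qv n d) : algC :=
  trop (mulop rho (wn (vopp p) (vopp q))).

Definition tensop (T : finType) (A B : op T) : op (T * T)%type :=
  fun x y => A x.1 y.1 * B x.2 y.2.
Definition ptrB (T : finType) (M : op (T * T)%type) : op T :=
  fun a a' => \sum_b M (a, b) (a', b).

Definition Umap (n d : nat) (g00 g01 g10 g11 : 'F_d) (x : (qv n d * qv n d)%type)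
  : qv n d * qv n d :=
  let N := (g00 * g11 - g01 * g10)^-1 in
  ([ffun k => N * g11 * x.1 k - N * g10 * x.2 k],
   [ffun k => - (N * g01 * x.1 k) + N * g00 * x.2 k]).
Definition Uop (n d : nat) (g00 g01 g10 g11 : 'F_d) : op (qv n d * qv n d)%type :=
  fun x y => (x == Umap g00 g01 g10 g11 y)%:R.

Definition conv (n d : nat) (g00 g01 g10 g11 : 'F_d) (rho sigma : op (qv n d))
  : op (qv n d) :=
  let U := Uop g00 g01 g10 g11 in
  ptrB (mulop (mulop U (tensop rho sigma)) (adjop U)).

From mathcomp Require Import all_boot all_order all_algebra all_field.
From mathcomp Require Import ring.
Import Order.TTheory GRing.Theory Num.Theory.
Local Open Scope ring_scope.
Set Implicit Arguments. Unset Strict Implicit.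

(* First, chi is an additive
   character of 'F_d, and the matrix of the n-qudit Weyl operator is
     <i| w(p,q) |j> = PH(p,q) * chi(<i,p>) * [i = j + q],
   where PH(p,q) is the product of the single-qudit phases; hence
     Xi_rho(p,q) = PH(-p,-q) * S_rho(p,q),
   with S_rho(p,q) = \sum_i rho(i, i-q) chi(<i-q,-p>) a "twisted trace".
   Second, the key unitary U permutes basis vectors, with inverse the linear
   map V(a,b) = (g00 a + g10 b, g01 a + g11 b), so the entries of the
   convolution are sums over b of rho(V(a,b)_1, V(a',b)_1) sigma(..._2).
   Reindexing the double sum in S_{rho [x] sigma} through U, the character
   splits (because N det G = 1) and S factors as S_rho(N g11 p, g00 q) *
   S_sigma(-N g10 p, g01 q).  Finally the phases factor in the same way:
   each single-qudit phase depends only on the product p q and is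
   multiplicative on the relevant decomposition of p q. *)

Lemma sum_delta_l (R : pzRingType) (T : finType) (c : T) (F : T -> R) :
  \sum_k (c == k)%:R * F k = F c.
Proof.
rewrite (bigD1 c) //= eqxx mul1r big1 ?addr0 // => k hk.
by rewrite eq_sym (negbTE hk) mul0r.
Qed.

Lemma sum_delta_r (R : pzRingType) (T : finType) (c : T) (F : T -> R) :
  \sum_k F k * (k == c)%:R = F c.
Proof.
rewrite (bigD1 c) //= eqxx mulr1 big1 ?addr0 // => k hk.
by rewrite (negbTE hk) mulr0.
Qed.

Lemma prod_delta (R : comPzRingType) (I : finType) (T : eqType) (x y : {ffun I -> T}) :
  \prod_k ((x k == y k)%:R : R) = (x == y)%:R.
Proof.
have [->|neq] := eqVneq x y; first by rewrite big1 // => k _; rewrite eqxx.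
have [k hk] : exists k, x k != y k.
  apply/existsP; apply: contraNT neq; rewrite negb_exists => /forallP h.
  by apply/eqP/ffunP => k; apply/eqP; move: (h k); rewrite negbK.
by rewrite (bigD1 k) //= (negbTE hk) mul0r.
Qed.

Section Character.
Variable d : nat.
Hypothesis d_prime : prime d.

Lemma omega_expd : omega d ^+ d = 1.
Proof.
rewrite /omega -exprM mulnC exprM rootCK ?prime_gt0 //.
by rewrite expr2 mulrNN mulr1.
Qed.

Lemma omega_exp_mod k : omega d ^+ (k %% d) = omega d ^+ k.
Proof. by rewrite {2}(divn_eq k d) exprD mulnC exprM omega_expd expr1n mul1r. Qed.

Lemma chiD (a b : 'F_d) : chi (a + b) = chi a * chi b.
Proof.
rewrite /chi -exprD /=; move: (a : nat) (b : nat) => x y.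
by rewrite Fp_cast // omega_exp_mod.
Qed.

Lemma chi0 : chi (0 : 'F_d) = 1.
Proof. by rewrite /chi expr0. Qed.

Lemma chi_sum (I : finType) (F : I -> 'F_d) : chi (\sum_i F i) = \prod_i chi (F i).
Proof. exact: (big_morph _ chiD chi0). Qed.

Lemma chiMn (a : 'F_d) m : chi (a *+ m) = chi a ^+ m.
Proof. by elim: m => [|m IH]; rewrite ?mulr0n ?chi0 ?expr0 // mulrS chiD IH exprS. Qed.

End Character.

Lemma expopS (T : finType) (A : op T) m : expop A m.+1 = mulop A (expop A m).
Proof. by rewrite /expop iterS. Qed.

Section Weyl.
Variable d : nat.
Hypothesis d_prime : prime d.

Lemma expop_Z m (i j : 'F_d) : expop (@Zop d) m i j = (i == j)%:R * chi i ^+ m.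
Proof.
elim: m i j => [|m IH] i j; first by rewrite expr0 mulr1.
rewrite expopS /mulop.
under eq_bigr => k _ do rewrite IH /Zop -mulrA.
by rewrite sum_delta_l mulrCA exprS.
Qed.

Lemma expop_X m (i j : 'F_d) : expop (@Xop d) m i j = (i == j + m%:R)%:R.
Proof.
elim: m i j => [|m IH] i j; first by rewrite addr0.
rewrite expopS /mulop.
under eq_bigr => k _ do rewrite IH.
by rewrite sum_delta_r /Xop mulrSr addrA.
Qed.

Lemma w1E (p q i j : 'F_d) :
  w1 p q i j = wphase p q * (chi (i * p) * (i == j + q)%:R).
Proof.
rewrite /w1 /mulop; congr (_ * _).
under eq_bigr => k _ do rewrite expop_Z expop_X -mulrA.
have natrF (x : 'F_d) : (x : nat)%:R = x by exact: natr_Zp.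
by rewrite sum_delta_l (natrF q) -chiMn // -(mulr_natr i p) (natrF p).
Qed.

Variable n : nat.

Definition vadd (x y : qv n d) : qv n d := [ffun k => x k + y k].
Definition dot (x y : qv n d) : 'F_d := \sum_k x k * y k.
Definition PH (p q : qv n d) : algC := \prod_k wphase (p k) (q k).

Lemma wnE (p q i j : qv n d) :
  wn p q i j = PH p q * (chi (dot i p) * (i == vadd j q)%:R).
Proof.
rewrite /wn; under eq_bigr => k _ do rewrite w1E.
rewrite !big_split /= -chi_sum // -(prod_delta _ i); congr (_ * (_ * _)).
by apply: eq_bigr => k _; rewrite ffunE.
Qed.

Definition twisted_trace (rho : op (qv n d)) (p q : qv n d) : algC :=
  \sum_i rho i (vadd i (vopp q)) * chi (dot (vadd i (vopp q)) (vopp p)).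

Lemma XiE (rho : op (qv n d)) p q :
  Xi rho p q = PH (vopp p) (vopp q) * twisted_trace rho p q.
Proof.
rewrite /Xi /trop /mulop /twisted_trace mulr_sumr; apply: eq_bigr => i _.
under eq_bigr => j _ do rewrite wnE mulrCA.
rewrite -mulr_sumr; congr (_ * _).
under eq_bigr => j _ do rewrite mulrA.
by rewrite sum_delta_r.
Qed.

End Weyl.

Section KeyUnitary.
Variables (d n : nat).
Variables g00 g01 g10 g11 : 'F_d.
Hypothesis detG_neq0 : g00 * g11 - g01 * g10 != 0.
Let N := (g00 * g11 - g01 * g10)^-1.

Lemma N_detG : N * (g00 * g11 - g01 * g10) = 1.
Proof. exact: mulVf. Qed.

Definition Vmap (x : qv n d * qv n d) : qv n d * qv n d :=
  ([ffun k => g00 * x.1 k + g10 * x.2 k], [ffun k => g01 * x.1 k + g11 * x.2 k]).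

Let U := Umap (n := n) g00 g01 g10 g11.

(* In each coordinate, composing the two maps multiplies by N det G = 1. *)
Lemma VmapK x : Vmap (U x) = x.
Proof.
case: x => a b; congr pair; apply/ffunP => k; rewrite !ffunE /=.
  by rewrite -[RHS]mul1r -N_detG /N; ring.
by rewrite -[RHS]mul1r -N_detG /N; ring.
Qed.

Lemma UmapK x : U (Vmap x) = x.
Proof.
case: x => a b; congr pair; apply/ffunP => k; rewrite !ffunE /=.
  by rewrite -[RHS]mul1r -N_detG /N; ring.
by rewrite -[RHS]mul1r -N_detG /N; ring.
Qed.

Lemma eq_Umap z x : (z == U x) = (Vmap z == x).
Proof. by apply/eqP/eqP => [->|<-]; rewrite ?VmapK ?UmapK. Qed.

Lemma convE (rho sigma : op (qv n d)) a a' :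
  conv g00 g01 g10 g11 rho sigma a a' =
  \sum_b rho (Vmap (a, b)).1 (Vmap (a', b)).1 *
         sigma (Vmap (a, b)).2 (Vmap (a', b)).2.
Proof.
rewrite /conv /ptrB; apply: eq_bigr => b _; rewrite /mulop /adjop /Uop.
under eq_bigr => y _ do under eq_bigr => x _ do rewrite eq_Umap.
under eq_bigr => y _ do rewrite sum_delta_l conjC_nat eq_Umap eq_sym.
by rewrite sum_delta_r.
Qed.

Lemma Vmap_shift (a b q : qv n d) :
  Vmap (vadd a (vopp q), b) =
  (vadd (Vmap (a, b)).1 (vopp (vscale g00 q)),
   vadd (Vmap (a, b)).2 (vopp (vscale g01 q))).
Proof. by congr pair; apply/ffunP => k; rewrite !ffunE /=; ring. Qed.

Lemma dot_Umap_split (p q : qv n d) (w : qv n d * qv n d) :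
  dot (vadd (U w).1 (vopp q)) (vopp p) =
  dot (vadd w.1 (vopp (vscale g00 q))) (vopp (vscale (N * g11) p)) +
  dot (vadd w.2 (vopp (vscale g01 q))) (vopp (vscale (- (N * g10)) p)).
Proof.
rewrite /dot -big_split /=; apply: eq_bigr => k _; rewrite !ffunE /=.
by rewrite -[in LHS](mul1r (q k)) -[in LHS]N_detG /N; ring.
Qed.

Hypothesis d_prime : prime d.

Lemma twisted_trace_conv (rho sigma : op (qv n d)) (p q : qv n d) :
  twisted_trace (conv g00 g01 g10 g11 rho sigma) p q =
  twisted_trace rho (vscale (N * g11) p) (vscale g00 q) *
  twisted_trace sigma (vscale (- (N * g10)) p) (vscale g01 q).
Proof.
rewrite /twisted_trace big_distrlr pair_bigA /=.
under eq_bigr => a _ do rewrite convE mulr_suml.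
rewrite pair_bigA (reindex U); last first.
  by apply: onW_bij; exists Vmap; [exact: VmapK | exact: UmapK].
apply: eq_bigr => w _.
rewrite Vmap_shift -surjective_pairing VmapK dot_Umap_split chiD //; ring.
Qed.

End KeyUnitary.

Definition wph (d : nat) (t : 'F_d) : algC :=
  if d == 2%N then ('i ^+ (t : nat))^-1 else chi (- (2%:R)^-1 * t).

Lemma F2_cases (x : 'F_2) : x = 0 \/ x = 1.
Proof. by case: x => [[|[|m]]] // H; [left|right]; apply: val_inj. Qed.

Lemma F2_idem (x : 'F_2) : x * x = x.
Proof. by case: (F2_cases x) => ->; rewrite ?mul0r ?mul1r. Qed.

Lemma wphaseE d (a b : 'F_d) : wphase a b = wph (a * b).
Proof.
rewrite /wphase /wph; case: eqP => [d2|_]; last by rewrite mulrA.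
by subst d; case: (F2_cases a) => ->; case: (F2_cases b) => ->.
Qed.

(* wph is a character, except that over 'F_2 it only adds on disjoint
   supports (i^1 * i^1 <> i^0). *)
Lemma wphD d (d_prime : prime d) (x y : 'F_d) :
  (d = 2%N -> x * y = 0) -> wph (x + y) = wph x * wph y.
Proof.
rewrite /wph; case: eqP => [d2|_ _]; last by rewrite -chiD // mulrDr.
subst d => /(_ erefl).
case: (F2_cases x) => ->; case: (F2_cases y) => -> //= _;
  by rewrite ?expr0 ?invr1 ?mul1r ?mulr1.
Qed.

Lemma wphase_split d (d_prime : prime d) (a b c1 e1 c2 e2 : 'F_d) :
  c1 * e1 + c2 * e2 = 1 ->
  wphase a b = wphase (c1 * a) (e1 * b) * wphase (c2 * a) (e2 * b).
Proof.
move=> hsum; rewrite !wphaseE -(wphD d_prime).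
  by congr wph; rewrite -[LHS]mul1r -hsum; ring.
move=> d2; subst d.
(* in 'F_2 the two summands of 1 are idempotents, hence disjoint *)
have disjoint : (c1 * e1) * (c2 * e2) = 0.
  have -> : c2 * e2 = 1 - c1 * e1 by rewrite -hsum; ring.
  by rewrite mulrBr mulr1 F2_idem subrr.
transitivity ((c1 * e1) * (c2 * e2) * (a * b * (a * b))); first ring.
by rewrite disjoint mul0r.
Qed.

Lemma PH_split d n (d_prime : prime d) (g00 g01 g10 g11 : 'F_d) (p q : qv n d) :
  g00 * g11 - g01 * g10 != 0 ->
  let N := (g00 * g11 - g01 * g10)^-1 in
  PH (vopp p) (vopp q) =
  PH (vopp (vscale (N * g11) p)) (vopp (vscale g00 q)) *
  PH (vopp (vscale (- (N * g10)) p)) (vopp (vscale g01 q)).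
Proof.
move=> detG_neq0 N; rewrite /PH -big_split /=; apply: eq_bigr => k _.
rewrite !ffunE (wphase_split d_prime (- p k) (- q k) (c1 := N * g11) (e1 := g00)
                  (c2 := - (N * g10)) (e2 := g01)) ?mulrN //.
by rewrite -(mulVf detG_neq0) /N; ring.
Qed.

Unset Implicit Arguments.
Set Strict Implicit.

Theorem mainTheorem7 (d n : nat) (hd : prime d) (hn : (0 < n)%N)
  (g00 g01 g10 g11 : 'F_d) (hG : g00 * g11 - g01 * g10 != 0)
  (rho sigma : op (qv n d)) (hrho : is_state rho) (hsigma : is_state sigma)
  (p q : qv n d) :
  let N := (g00 * g11 - g01 * g10)^-1 in
  Xi (conv g00 g01 g10 g11 rho sigma) p q =
    Xi rho (vscale (N * g11) p) (vscale g00 q) *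
    Xi sigma (vscale (- (N * g10)) p) (vscale g01 q).
Proof.
move=> N; rewrite !(XiE hd) (PH_split hd p q hG) (twisted_trace_conv hG hd).
by rewrite mulrACA.
Qed.
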